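(* Suppose the adversary places $b\ge 1$ bad objects into $s\ge 1$ targeted indices, each of which contains at least one of these bad objects. Then the adversary's total RB cost satisfies $\mathcal{B}\ge \dfrac{b^2}{8s}$.
   Context: Model. A hash table has $t$ indices with chaining. The objects at an index form a list, new objects are appended at the tail, and $L_i$ denotes the current number of objects in the list at index $i$. Under the algorithm \textsc{Depth Charge}, inserting an object at index $i$ costs the inserter an RB (resource-burning) cost of $L_i+1$. Objects inserted by the adversary are bad objects and are placed at indices of its choosing; objects inserted by clients are good objects. $\mathcal{B}$ denotes the total RB cost paid by the adversary. A targeted index is an index containing at least one bad object and at least one good object. *)

From mathcomp Require Import all_boot all_order all_algebra.
Set Implicit Arguments. Unset Strict Implicit. Unset Printing Implicit Defensive.

(* A hash table with t indices 'I_t and chaining.  An execution is the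
   sequence of insertions, in order; each insertion is a pair (i, bad)
   where i is the index and bad = true iff the object is a bad object
   (inserted by the adversary), bad = false for a good (client) object. *)
Definition event (t : nat) := ('I_t * bool)%type.

Definition list_len (t : nat) (hist : seq (event t)) (i : 'I_t) : nat :=
  count (fun x : event t => x.1 == i) hist.

(* Depth Charge: inserting at index i costs L_i + 1.  rb_cost_aux sums
   these costs over the bad insertions only. *)
Fixpoint rb_cost_aux (t : nat) (hist : seq (event t)) (e : seq (event t)) : nat :=
  match e with
  | [::] => 0
  | x :: e' =>
      (if x.2 then (list_len hist x.1).+1 else 0) + rb_cost_aux (rcons hist x) e'
  end.

Definition adv_cost (t : nat) (e : seq (event t)) : nat := rb_cost_aux [::] e.

Definition num_bad (t : nat) (e : seq (event t)) : nat :=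
  count (fun x : event t => x.2) e.

Definition has_bad (t : nat) (e : seq (event t)) (i : 'I_t) : bool :=
  has (fun x : event t => (x.1 == i) && x.2) e.
Definition has_good (t : nat) (e : seq (event t)) (i : 'I_t) : bool :=
  has (fun x : event t => (x.1 == i) && ~~ x.2) e.

Definition targeted (t : nat) (e : seq (event t)) (i : 'I_t) : bool :=
  has_bad e i && has_good e i.

From mathcomp Require Import all_boot all_order all_algebra zify.
Import GRing.Theory Num.Theory.
Set Implicit Arguments. Unset Strict Implicit.

(* Let c_i(h) be the number of bad objects at index i after the
   history h, and Phi(h) = sum_i c_i(h)^2.  A good insertion leaves Phi
   unchanged; a bad insertion at j raises it by 2 c_j + 1 <= 2 (L_j + 1),
   i.e. by at most twice the RB cost the adversary pays for it.  Summing over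
   the execution gives Phi(e) <= 2 B.  The b bad objects all lie in the s
   indices holding a bad object, so Cauchy-Schwarz gives
   b^2 <= s * Phi(e) <= 2 s B, which is stronger than the claimed b^2/(8s). *)

Lemma sum_double_prod_le (I : Type) (r : seq I) (x : I -> nat) (a : nat) :
  2 * a * (\sum_(i <- r) x i) <= size r * a ^ 2 + \sum_(i <- r) x i ^ 2.
Proof.
elim: r => [|y r IH]; first by rewrite !big_nil muln0.
rewrite !big_cons /=.
have amgm : 2 * (a * x y) <= a ^ 2 + x y ^ 2 := nat_Cauchy a (x y).
lia.
Qed.

Lemma sqr_sum_le (I : Type) (r : seq I) (x : I -> nat) :
  (\sum_(i <- r) x i) ^ 2 <= size r * \sum_(i <- r) x i ^ 2.
Proof.
elim: r => [|y r IH]; first by rewrite !big_nil.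
rewrite !big_cons /=.
have := sum_double_prod_le r x (x y).
nia.
Qed.

Section BadCounts.
Variable t : nat.
Implicit Types (h e : seq (event t)) (i j : 'I_t).

Definition bad_count h i : nat :=
  count (fun x : event t => (x.1 == i) && x.2) h.

Definition bad_potential h : nat := \sum_(i < t) bad_count h i ^ 2.

Lemma bad_count_le_list_len h i : bad_count h i <= list_len h i.
Proof. by apply: sub_count => x /andP[]. Qed.

Lemma bad_count_rcons h x i :
  bad_count (rcons h x) i = bad_count h i + ((x.1 == i) && x.2).
Proof. by rewrite /bad_count -cats1 count_cat /= addn0. Qed.

Lemma num_bad_sum e : num_bad e = \sum_(i < t) bad_count e i.
Proof.
elim: e => [|x e IH]; first by rewrite /num_bad big1.
rewrite /num_bad /= -/(num_bad e) IH /bad_count /= big_split /=; congr (_ + _).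
case: x.2; last by rewrite big1 // => i; rewrite andbF.
rewrite (bigD1 x.1) //= eqxx big1 // => i /negbTE.
by rewrite eq_sym => ->.
Qed.

Lemma bad_potential_rcons_good h j :
  bad_potential (rcons h (j, false)) = bad_potential h.
Proof.
by apply: eq_bigr => i _; rewrite bad_count_rcons andbF addn0.
Qed.

Lemma bad_potential_rcons_bad h j :
  bad_potential (rcons h (j, true)) = bad_potential h + (2 * bad_count h j).+1.
Proof.
rewrite /bad_potential (bigD1 j) //= [in RHS](bigD1 j) //=.
have others : \sum_(i < t | i != j) bad_count (rcons h (j, true)) i ^ 2 =
              \sum_(i < t | i != j) bad_count h i ^ 2.
  by apply: eq_bigr => i /negbTE ji; rewrite bad_count_rcons eq_sym ji addn0.
rewrite others bad_count_rcons eqxx /=.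
(* Abstract the untouched part so that lia treats it as one atom. *)
set others_sum := \sum_(i < t | i != j) _.
rewrite sqrnD exp1n muln1; lia.
Qed.

Lemma bad_potential_le_cost h e :
  bad_potential (h ++ e) <= bad_potential h + 2 * rb_cost_aux h e.
Proof.
elim: e h => [|[j bd] e IH] h /=; first by rewrite cats0 addn0.
rewrite -cat_rcons; apply: leq_trans (IH (rcons h (j, bd))) _.
case: bd => /=; last by rewrite bad_potential_rcons_good.
rewrite bad_potential_rcons_bad.
have := bad_count_le_list_len h j.
lia.
Qed.

Lemma bad_potential_le_adv_cost e : bad_potential e <= 2 * adv_cost e.
Proof.
by have := bad_potential_le_cost [::] e; rewrite cat0s [bad_potential [::]]big1.
Qed.

Lemma num_bad_sum_has_bad e :
  num_bad e = \sum_(i in [set i | has_bad e i]) bad_count e i.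
Proof.
rewrite num_bad_sum (bigID (mem [set i | has_bad e i])) /= [X in _ + X]big1 ?addn0 //.
move=> i; rewrite inE => /negbTE no_bad.
by apply/eqP; rewrite -leqn0 leqNgt -has_count -/(has_bad e i) no_bad.
Qed.

End BadCounts.

Theorem lemma2 (t : nat) (e : seq (event t)) (b s : nat) :
  (1 <= b)%N -> (1 <= s)%N ->
  num_bad e = b ->
  #|[set i : 'I_t | has_bad e i]| = s ->
  (forall i : 'I_t, has_bad e i -> targeted e i) ->
  ((b ^ 2)%:R / (8 * s)%:R <= (adv_cost e)%:R :> rat)%R.
Proof.
move=> b_gt0 s_gt0 nb_e card_S _.
set S := [set i : 'I_t | has_bad e i].
have b_sum_S : b = \sum_(i in S) bad_count e i by rewrite -nb_e num_bad_sum_has_bad.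
have cauchy_schwarz : b ^ 2 <= s * \sum_(i in S) bad_count e i ^ 2.
  by rewrite b_sum_S -card_S -!big_enum /= cardE sqr_sum_le.
have sub_potential : \sum_(i in S) bad_count e i ^ 2 <= bad_potential e.
  by rewrite /bad_potential [X in _ <= X](bigID (mem S)) /= leq_addr.
have potential_cost := bad_potential_le_adv_cost e.
have cost_bound : b ^ 2 <= 8 * s * adv_cost e by nia.
rewrite ler_pdivrMr ?ltr0n ?muln_gt0 // -natrM ler_nat.
by rewrite mulnC cost_bound.
Qed.
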